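(* Let $(D_i)_{i\in\mathbb N}$ be a sequence of nontrivial discrete groups, $G=\prod_{i\in\mathbb N}D_i$ with the product topology, and $H=\{g\in G:\{i:g(i)\neq e_{D_i}\}\text{ finite}\}$ with the topology induced from $G$. Then: (1) every sequence in $G$ converging to the neutral element $e$ is hyper-multipliable in $G$ (in particular hyper-converging); (2) every sequence in $H$ which is super-multipliable in $H$ is eventually neutral; (3) every sequence in $H$ which is hyper-multipliable in $H$ is eventually neutral.
   Context: $\prod_{k=1}^n a_k=a_1\cdots a_n$. A sequence $(g_n)$ in a topological group with neutral element $e$ is: eventually neutral if $\{n:g_n\ne e\}$ is finite; hyper-multipliable if for every integer sequence $(m_n)$, $\left(\prod_{k=1}^n g_k^{m_k}\right)_n$ converges in the group; super-multipliable if the same holds for all $(m_n)$ with values in $\{0,1\}$; hyper-converging if $g_n^{m_n}\to e$ for every integer sequence $(m_n)$. *)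

From Stdlib Require Import ZArith List.
Import ListNotations.
Open Scope Z_scope.

(* A group (no topology: each D_i carries the discrete topology). *)
Record Grp := {
  carrier :> Type;
  gmul : carrier -> carrier -> carrier;
  ginv : carrier -> carrier;
  gone : carrier;
  gmul_assoc : forall x y z, gmul x (gmul y z) = gmul (gmul x y) z;
  gmul_1l : forall x, gmul gone x = x;
  gmul_Vl : forall x, gmul (ginv x) x = gone
}.

Arguments gmul {_} _ _.
Arguments ginv {_} _.
Arguments gone {_}.

Definition nontrivial (D : Grp) : Prop := exists x : D, x <> gone.

Fixpoint gpow {D : Grp} (x : D) (n : nat) : D :=
  match n with O => gone | S k => gmul (gpow x k) x end.

Definition zpow {D : Grp} (x : D) (z : Z) : D :=
  match z with
  | Z0 => gone
  | Zpos p => gpow x (Pos.to_nat p)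
  | Zneg p => ginv (gpow x (Pos.to_nat p))
  end.

Section Product.
Variable D : nat -> Grp.

Definition PG : Type := forall i : nat, D i.
Definition pmul (x y : PG) : PG := fun i => gmul (x i) (y i).
Definition pone : PG := fun i => gone.
Definition pzpow (x : PG) (z : Z) : PG := fun i => zpow (x i) z.

Definition inH (x : PG) : Prop :=
  exists l : list nat, forall i, x i <> gone -> In i l.

(* Convergence in the product topology of discrete spaces: every basic
   neighbourhood of x (fixing finitely many coordinates, listed in F)
   eventually contains the sequence. *)
Definition conv (s : nat -> PG) (x : PG) : Prop :=
  forall F : list nat, exists N : nat, forall n, (N <= n)%nat ->
    forall i, In i F -> s n i = x i.

Fixpoint pprod (g : nat -> PG) (m : nat -> Z) (n : nat) : PG :=
  match n with
  | O => pone
  | S k => pmul (pprod g m k) (pzpow (g k) (m k))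
  end.

Definition eventually_neutral (g : nat -> PG) : Prop :=
  exists l : list nat, forall n, g n <> pone -> In n l.

Definition hyper_mult_G (g : nat -> PG) : Prop :=
  forall m : nat -> Z, exists x : PG, conv (pprod g m) x.

Definition hyper_conv_G (g : nat -> PG) : Prop :=
  forall m : nat -> Z, conv (fun n => pzpow (g n) (m n)) pone.

(* in H (induced topology: the limit must lie in H) *)
Definition hyper_mult_H (g : nat -> PG) : Prop :=
  forall m : nat -> Z, exists x : PG, inH x /\ conv (pprod g m) x.

Definition super_mult_H (g : nat -> PG) : Prop :=
  forall m : nat -> Z, (forall n, m n = 0 \/ m n = 1) ->
    exists x : PG, inH x /\ conv (pprod g m) x.
End Product.

(* (1) If g_n -> e in G then at every coordinate i only finitely many g_n are
       non-neutral, so every partial product g_0^{m_0} ... g_{n-1}^{m_{n-1}} is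
       eventually constant at coordinate i; a sequence that is eventually
       constant at each coordinate converges.  Hyper-convergence is immediate.
   (2) If g is super-multipliable in H then (taking all m_n = 1) the factors
       tend to e.  If moreover g is not eventually neutral, a sliding-hump
       construction yields indices n_0 < n_1 < ... and coordinates i_k with
       g_{n_k}(i_k) <> e and g_{n_j}(i_k) = e for j <> k.  Multiplying exactly
       the g_{n_k} gives partial products whose limit is non-neutral at every
       (pairwise distinct) coordinate i_k, hence not in H: a contradiction.
   (3) Hyper-multipliability implies super-multipliability. *)

From Stdlib Require Import ZArith List Lia Classical ClassicalEpsilon
  FunctionalExtensionality FinFun.
Import ListNotations.

Section GroupFacts.
Variable G : Grp.

Lemma mul_left_cancel_one (a b : G) : gmul a b = a -> b = gone.
Proof.
  intro H. transitivity (gmul (gmul (ginv a) a) b).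
  - rewrite gmul_Vl. symmetry. apply gmul_1l.
  - rewrite <- gmul_assoc, H. apply gmul_Vl.
Qed.

Lemma gmul_Vr (x : G) : gmul x (ginv x) = gone.
Proof.
  rewrite <- (gmul_1l G (gmul x (ginv x))).
  rewrite <- (gmul_Vl G (ginv x)) at 1.
  rewrite <- gmul_assoc, (gmul_assoc G (ginv x) x (ginv x)), gmul_Vl, gmul_1l.
  apply gmul_Vl.
Qed.

Lemma gmul_1r (x : G) : gmul x gone = x.
Proof. rewrite <- (gmul_Vl G x), gmul_assoc, gmul_Vr. apply gmul_1l. Qed.

Lemma ginv_one : ginv (@gone G) = gone.
Proof. rewrite <- (gmul_1r (ginv gone)). apply gmul_Vl. Qed.

Lemma zpow_one_base (z : Z) : zpow (@gone G) z = gone.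
Proof.
  assert (Hpow : forall n, gpow (@gone G) n = gone).
  { induction n as [|n IH]; simpl; [reflexivity|]. rewrite IH. apply gmul_1l. }
  destruct z; simpl; rewrite ?Hpow, ?ginv_one; reflexivity.
Qed.

Lemma zpow_exp1 (x : G) : zpow x 1%Z = x.
Proof. apply gmul_1l. Qed.

End GroupFacts.

Section Product.
Variable D : nat -> Grp.

Lemma conv_of_eventually_constant (s : nat -> PG D) (N : nat -> nat) :
  (forall i n, (N i <= n)%nat -> s n i = s (N i) i) ->
  conv D s (fun i => s (N i) i).
Proof.
  intros Hs F. induction F as [|i F [M HM]].
  - exists 0%nat. intros n _ j [].
  - exists (Nat.max (N i) M). intros n Hn j [<-|Hj].
    + apply Hs. lia.
    + apply HM; [lia|exact Hj].
Qed.

Lemma null_coordinatewise (g : nat -> PG D) :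
  conv D g (pone D) ->
  forall i, exists N, forall k, (N <= k)%nat -> g k i = gone.
Proof.
  intros Hc i. destruct (Hc [i]) as [N HN].
  exists N. intros k Hk. apply (HN k Hk). now left.
Qed.

Lemma pprod_coord_stable (g : nat -> PG D) (m : nat -> Z) (i N : nat) :
  (forall k, (N <= k)%nat -> g k i = gone) ->
  forall n, (N <= n)%nat -> pprod D g m n i = pprod D g m N i.
Proof.
  intros Hg n Hn. induction Hn as [|n Hn IH]; [reflexivity|].
  cbn [pprod]. unfold pmul, pzpow.
  rewrite Hg by lia. rewrite zpow_one_base, gmul_1r. exact IH.
Qed.

Lemma null_hyper_mult (g : nat -> PG D) :
  conv D g (pone D) -> hyper_mult_G D g.
Proof.
  intros Hc m.
  destruct (choice _ (null_coordinatewise g Hc)) as [N HN].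
  exists (fun i => pprod D g m (N i) i).
  apply conv_of_eventually_constant. intros i n Hn.
  exact (pprod_coord_stable g m i (N i) (HN i) n Hn).
Qed.

Lemma null_hyper_conv (g : nat -> PG D) :
  conv D g (pone D) -> hyper_conv_G D g.
Proof.
  intros Hc m F. destruct (Hc F) as [N HN]. exists N. intros n Hn i Hi.
  unfold pzpow. rewrite (HN n Hn i Hi). apply zpow_one_base.
Qed.

(* If the plain partial products g_0 ... g_{n-1} converge, then g_n -> e,
   since consecutive partial products eventually agree on each finite set. *)
Lemma factors_null (g : nat -> PG D) (x : PG D) :
  conv D (pprod D g (fun _ => 1%Z)) x -> conv D g (pone D).
Proof.
  intros Hx F. destruct (Hx F) as [N HN]. exists N. intros n Hn i Hi.
  pose proof (HN (S n) ltac:(lia) i Hi) as Hnext.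
  cbn [pprod] in Hnext. unfold pmul, pzpow in Hnext.
  rewrite zpow_exp1, <- (HN n Hn i Hi) in Hnext.
  exact (mul_left_cancel_one _ _ _ Hnext).
Qed.

Lemma non_neutral_beyond (g : nat -> PG D) :
  ~ eventually_neutral D g ->
  forall N, exists p : nat * nat, (N <= fst p)%nat /\ g (fst p) (snd p) <> gone.
Proof.
  intros Hne N. apply NNPP. intro Hnone. apply Hne.
  exists (seq 0 N). intros n Hn. apply in_seq.
  split; [lia|]. destruct (Nat.lt_ge_cases n N) as [Hlt|Hge]; [lia|].
  exfalso. apply Hn. apply functional_extensionality_dep. intro i.
  apply NNPP. intro Hi. apply Hnone. now exists (n, i).
Qed.

Lemma pprod_single_factor (g : nat -> PG D) (m : nat -> Z) (i p : nat) :
  (forall n, n <> p -> zpow (g n i) (m n) = gone) ->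
  forall n, pprod D g m n i =
            if (p <? n)%nat then zpow (g p i) (m p) else gone.
Proof.
  intros Hother n. induction n as [|n IH]; [reflexivity|].
  cbn [pprod]. unfold pmul, pzpow. rewrite IH.
  destruct (Nat.eq_dec n p) as [->|Hnp].
  - rewrite (proj2 (Nat.ltb_ge p p)), (proj2 (Nat.ltb_lt p (S p))) by lia.
    apply gmul_1l.
  - rewrite (Hother n Hnp), gmul_1r.
    destruct (Nat.ltb_spec p n), (Nat.ltb_spec p (S n)); reflexivity || lia.
Qed.

End Product.

Lemma injective_escapes_list (f : nat -> nat) (l : list nat) :
  Injective f -> ~ (forall k, In (f k) l).
Proof.
  intros Hinj Hin.
  assert (Hnd : NoDup (map f (seq 0 (S (length l))))).
  { apply Injective_map_NoDup; [exact Hinj|apply seq_NoDup]. }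
  assert (Hincl : incl (map f (seq 0 (S (length l)))) l).
  { intros a Ha. apply in_map_iff in Ha. destruct Ha as [k [<- _]]. apply Hin. }
  pose proof (NoDup_incl_length Hnd Hincl) as Hlen.
  rewrite length_map, length_seq in Hlen. lia.
Qed.

(* The state after k steps records the
   coordinates already used (the supports of the chosen terms) and a lower
   bound for the next index.  The next term is taken far enough out to be
   neutral on all used coordinates, and non-neutral at some coordinate, which
   is therefore fresh. *)
Section SlidingHump.
Variable D : nat -> Grp.
Variable g : nat -> PG D.

(* [bound F]: beyond it all terms are neutral on F (g is null);
   [hump N]: an index >= N and a coordinate where that term is non-neutral;
   [supp n]: a finite list containing the support of g n (g n lies in H). *)
Variable bound : list nat -> nat.
Hypothesis bound_spec :
  forall F n, (bound F <= n)%nat -> forall i, In i F -> g n i = gone.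
Variable hump : nat -> nat * nat.
Hypothesis hump_spec :
  forall N, (N <= fst (hump N))%nat /\ g (fst (hump N)) (snd (hump N)) <> gone.
Variable supp : nat -> list nat.
Hypothesis supp_spec : forall n i, g n i <> gone -> In i (supp n).

Definition hump_at (st : list nat * nat) : nat * nat :=
  hump (Nat.max (snd st) (bound (fst st))).

Definition hump_step (st : list nat * nat) : list nat * nat :=
  (supp (fst (hump_at st)) ++ fst st, S (fst (hump_at st))).

Definition hump_state (k : nat) : list nat * nat :=
  Nat.iter k hump_step ([], 0%nat).

Definition hump_index (k : nat) : nat := fst (hump_at (hump_state k)).
Definition hump_coord (k : nat) : nat := snd (hump_at (hump_state k)).
Definition used (k : nat) : list nat := fst (hump_state k).

Lemma hump_nonneutral k : g (hump_index k) (hump_coord k) <> gone.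
Proof. apply hump_spec. Qed.

Lemma hump_neutral_on_used k i : In i (used k) -> g (hump_index k) i = gone.
Proof.
  apply bound_spec. unfold hump_index, hump_at, used.
  pose proof (proj1 (hump_spec (Nat.max (snd (hump_state k))
    (bound (fst (hump_state k)))))). lia.
Qed.

Lemma hump_index_increasing k : (hump_index k < hump_index (S k))%nat.
Proof.
  pose proof (proj1 (hump_spec (Nat.max (snd (hump_state (S k)))
    (bound (fst (hump_state (S k))))))) as H.
  unfold hump_index at 2, hump_at.
  change (snd (hump_state (S k))) with (S (hump_index k)) in H |- *. lia.
Qed.

Lemma used_mono k j : (k <= j)%nat -> incl (used k) (used j).
Proof.
  induction 1 as [|j _ IH]; [apply incl_refl|].
  unfold used at 2. cbn [hump_state Nat.iter]. apply incl_appr, IH.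
Qed.

Lemma supp_hump_used k : incl (supp (hump_index k)) (used (S k)).
Proof. apply incl_appl, incl_refl. Qed.

Lemma humps_disjoint j k : j <> k -> g (hump_index j) (hump_coord k) = gone.
Proof.
  intro Hjk. destruct (Nat.lt_gt_cases j k) as [[Hlt|Hgt] _]; [exact Hjk| |].
  - apply NNPP. intro Hne. apply (hump_nonneutral k), hump_neutral_on_used.
    apply (used_mono (S j) k Hlt), supp_hump_used, supp_spec, Hne.
  - apply hump_neutral_on_used, (used_mono (S k) j Hgt), supp_hump_used.
    apply supp_spec, hump_nonneutral.
Qed.

End SlidingHump.

Lemma disjoint_humps (D : nat -> Grp) (g : nat -> PG D) :
  (forall n, inH D (g n)) -> conv D g (pone D) -> ~ eventually_neutral D g ->
  exists nk ik : nat -> nat,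
    (forall k, (nk k < nk (S k))%nat) /\
    (forall k, g (nk k) (ik k) <> gone) /\
    (forall j k, j <> k -> g (nk j) (ik k) = gone).
Proof.
  intros Hsupp Hnull Hne.
  destruct (choice _ Hnull) as [bound Hbound].
  destruct (choice _ (non_neutral_beyond D g Hne)) as [hump Hhump].
  destruct (choice (fun n l => forall i, g n i <> gone -> In i l) Hsupp)
    as [supp Hsupp_spec].
  exists (hump_index bound hump supp), (hump_coord bound hump supp).
  repeat split.
  - eapply hump_index_increasing; eassumption.
  - eapply hump_nonneutral; eassumption.
  - eapply humps_disjoint; eassumption.
Qed.

Lemma humps_selection_leaves_H (D : nat -> Grp) (g : nat -> PG D)
    (nk ik : nat -> nat) :
  (forall k, (nk k < nk (S k))%nat) ->
  (forall k, g (nk k) (ik k) <> gone) ->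
  (forall j k, j <> k -> g (nk j) (ik k) = gone) ->
  exists m : nat -> Z, (forall n, m n = 0%Z \/ m n = 1%Z) /\
    forall x, conv D (pprod D g m) x -> ~ inH D x.
Proof.
  intros Hincr Hhump Hdisj.
  assert (Hmono : forall j k, (j < k)%nat -> (nk j < nk k)%nat).
  { intros j k Hjk. induction Hjk as [|k _ IH]; [apply Hincr|].
    specialize (Hincr k). lia. }
  assert (Hinj : Injective nk).
  { intros j k E. destruct (Nat.lt_total j k) as [H|[H|H]];
      [apply Hmono in H; lia|exact H|apply Hmono in H; lia]. }
  set (m := fun n => if excluded_middle_informative (exists k, nk k = n)
                     then 1%Z else 0%Z).
  exists m. split.
  { intro n. unfold m. destruct (excluded_middle_informative _); auto. }
  assert (Hpprod : forall k n, pprod D g m n (ik k) =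
            if (nk k <? n)%nat then g (nk k) (ik k) else gone).
  { intros k n. rewrite (pprod_single_factor D g m (ik k) (nk k)).
    - unfold m. destruct (excluded_middle_informative _) as [_|Hno].
      + now rewrite zpow_exp1.
      + exfalso. apply Hno. now exists k.
    - intros n' Hn'. unfold m. destruct (excluded_middle_informative _) as [[j <-]|_].
      + rewrite zpow_exp1. apply Hdisj. intro E. apply Hn'. now subst.
      + reflexivity. }
  intros x Hx [l Hl].
  apply (injective_escapes_list ik l).
  - intros j k E. destruct (Nat.eq_dec j k) as [|Hjk]; [assumption|].
    exfalso. apply (Hhump j). rewrite E. exact (Hdisj j k Hjk).
  - intro k. apply Hl. destruct (Hx [ik k]) as [N HN].
    rewrite <- (HN (Nat.max N (S (nk k))) ltac:(lia) (ik k) ltac:(now left)).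
    rewrite Hpprod, (proj2 (Nat.ltb_lt _ _)) by lia. apply Hhump.
Qed.

Lemma super_mult_H_eventually_neutral (D : nat -> Grp) (g : nat -> PG D) :
  (forall n, inH D (g n)) -> super_mult_H D g -> eventually_neutral D g.
Proof.
  intros Hsupp Hsuper. apply NNPP. intro Hne.
  destruct (Hsuper (fun _ => 1%Z) (fun _ => or_intror eq_refl)) as [x [_ Hx]].
  destruct (disjoint_humps D g Hsupp (factors_null D g x Hx) Hne)
    as [nk [ik [Hincr [Hhump Hdisj]]]].
  destruct (humps_selection_leaves_H D g nk ik Hincr Hhump Hdisj) as [m [Hm Hout]].
  destruct (Hsuper m Hm) as [y [HyH Hy]].
  exact (Hout y Hy HyH).
Qed.

Theorem proposition2p4 (D : nat -> Grp) (hD : forall i, nontrivial (D i)) :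
  (forall g : nat -> PG D, conv D g (pone D) ->
     hyper_mult_G D g /\ hyper_conv_G D g) /\
  (forall g : nat -> PG D, (forall n, inH D (g n)) ->
     super_mult_H D g -> eventually_neutral D g) /\
  (forall g : nat -> PG D, (forall n, inH D (g n)) ->
     hyper_mult_H D g -> eventually_neutral D g).
Proof.
  split; [|split].
  - intros g Hg. split; [exact (null_hyper_mult D g Hg)|exact (null_hyper_conv D g Hg)].
  - exact (super_mult_H_eventually_neutral D).
  - intros g Hsupp Hhyper. apply (super_mult_H_eventually_neutral D g Hsupp).
    intros m _. apply Hhyper.
Qed.
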